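(* Let $n>30$ with $n\equiv 0\pmod 6$, and let $\mathcal{H}$ and $\Pi$ be as defined in the context. If $H,H'\in\mathcal{H}$ with $H\neq H'$, then $\Pi\cap H\cap H'=\emptyset$; that is, the subgroups in $\mathcal{H}$ partition $\Pi$.
   Context: $S_n$ is the symmetric group on $\{1,\dots,n\}$, $n\equiv 0\pmod 6$. Subgroup classes: $\mathcal{H}_{-1}$ is the set of stabilizers in $S_n$ of partitions of $\{1,\dots,n\}$ into two blocks of size $n/2$ (a stabilizer may swap the two blocks); $\mathcal{H}_0=\{A_n\}$; for $1\le i\le n/3-1$, $\mathcal{H}_i$ is the set of setwise stabilizers in $S_n$ of $i$-element subsets of $\{1,\dots,n\}$; $\mathcal{H}=\bigcup_{i=-1}^{n/3-1}\mathcal{H}_i$. Permutation classes (cycle lengths listed, all of which together account for all $n$ points): $\Pi_{-1}$ is the set of $n$-cycles; $\Pi_0$ is the set of products of two disjoint cycles of lengths $n/2-1$ and $n/2+1$ if $n/2$ is even, respectively $n/2-2$ and $n/2+2$ if $n/2$ is odd; $\Pi_1$ is the set of elements with exactly one fixed point and two further cycles of lengths $n/2-2$ and $n/2+1$; for odd $i$ with $3\le i\le n/3-1$, $\Pi_i$ is the set of products of three disjoint cycles of lengths $i$, $(n-i-1)/2$, $(n-i+1)/2$; for even $i$ with $2\le i\le n/3-1$ and $(n-i)/2$ odd, $\Pi_i$ consists of products of three disjoint cycles of lengths $i,(n-i)/2,(n-i)/2$; for even $i$ with $4\le i\le n/3-1$ and $(n-i)/2$ even, $\Pi_i$ consists of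 products of three disjoint cycles of lengths $i,(n-i)/2-1,(n-i)/2+1$; if $(n-2)/2$ is even, $\Pi_2$ consists of products of three disjoint cycles of lengths $2, n/2-4, n/2+2$. Finally $\Pi=\bigcup_{i=-1}^{n/3-1}\Pi_i$. *)

From mathcomp Require Import all_boot all_fingroup all_solvable.
Set Implicit Arguments. Unset Strict Implicit. Unset Printing Implicit Defensive.

(* Multiset of cycle lengths of s (fixed points counted as cycles of length 1). *)
Definition cycle_lengths (n : nat) (s : {perm 'I_n}) : seq nat :=
  [seq #|(X : {set 'I_n})| | X <- enum (porbits s)].

Definition has_cycle_type (n : nat) (s : {perm 'I_n}) (l : seq nat) : Prop :=
  perm_eq (cycle_lengths s) l.

Definition part_stab (n : nat) (A : {set 'I_n}) : {set {perm 'I_n}} :=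
  [set s : {perm 'I_n} | (s @: A == A) || (s @: A == ~: A)].

Definition set_stab (n : nat) (A : {set 'I_n}) : {set {perm 'I_n}} :=
  [set s : {perm 'I_n} | s @: A == A].

Definition in_Hm1 (n : nat) (H : {set {perm 'I_n}}) : Prop :=
  exists A : {set 'I_n}, #|A| = n %/ 2 /\ H = part_stab A.
Definition in_H0 (n : nat) (H : {set {perm 'I_n}}) : Prop :=
  H = ('Alt_('I_n))%g.
Definition in_Hi (n i : nat) (H : {set {perm 'I_n}}) : Prop :=
  exists A : {set 'I_n}, #|A| = i /\ H = set_stab A.

Definition in_calH (n : nat) (H : {set {perm 'I_n}}) : Prop :=
  in_Hm1 H \/ in_H0 H \/
  exists i, 1 <= i <= n %/ 3 - 1 /\ in_Hi i H.

Definition in_Pim1 (n : nat) (s : {perm 'I_n}) : Prop :=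
  has_cycle_type s [:: n].
Definition in_Pi0 (n : nat) (s : {perm 'I_n}) : Prop :=
  if ~~ odd (n %/ 2) then has_cycle_type s [:: n %/ 2 - 1; n %/ 2 + 1]
  else has_cycle_type s [:: n %/ 2 - 2; n %/ 2 + 2].
Definition in_Pi1 (n : nat) (s : {perm 'I_n}) : Prop :=
  has_cycle_type s [:: 1; n %/ 2 - 2; n %/ 2 + 1].
Definition in_Pi_ge2 (n i : nat) (s : {perm 'I_n}) : Prop :=
  [/\ 2 <= i, i <= n %/ 3 - 1 &
   if odd i then
     3 <= i /\ has_cycle_type s [:: i; (n - i - 1) %/ 2; (n - i + 1) %/ 2]
   else if odd ((n - i) %/ 2) then
     has_cycle_type s [:: i; (n - i) %/ 2; (n - i) %/ 2]
   else if i == 2 then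
     has_cycle_type s [:: 2; n %/ 2 - 4; n %/ 2 + 2]
   else
     has_cycle_type s [:: i; (n - i) %/ 2 - 1; (n - i) %/ 2 + 1]].

Definition in_Pi (n : nat) (s : {perm 'I_n}) : Prop :=
  in_Pim1 s \/ in_Pi0 s \/ in_Pi1 s \/ exists i, in_Pi_ge2 i s.

From mathcomp Require Import all_boot all_fingroup all_solvable.
From mathcomp Require Import zify.
Set Implicit Arguments. Unset Strict Implicit. Unset Printing Implicit Defensive.

(* A set stabilised by s is a union of cycles of s, so its size is a sum of a
   sub-multiset of the cycle lengths; a half of a partition swapped by s meets
   every cycle in exactly half of its points, so all cycles are then even; and
   for n even, s lies in A_n iff it has an even number of cycles.  For an
   n-cycle this leaves only partition stabilisers, and two halves A, A' swapped
   by s differ by the s-stable set {x | x \in A <-> x \in A'}, which must be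
   empty or everything.  For the two-cycle types it leaves only A_n.  For the
   three-cycle types it leaves only stabilisers of sets of size i, and such a
   set is the unique cycle of length i. *)

Definition is_subsum (L : seq nat) (v : nat) : Prop :=
  exists l1 l2, perm_eq L (l1 ++ l2) /\ sumn l1 = v.

Lemma is_subsum_perm L L' v : perm_eq L L' -> is_subsum L v -> is_subsum L' v.
Proof.
move=> eqLL' [l1 [l2 [eqL <-]]]; exists l1, l2; split=> //.
by apply: perm_trans eqL; rewrite perm_sym.
Qed.

Lemma is_subsum_nil v : is_subsum [::] v -> v = 0.
Proof. by case=> [[|x l1] [[|y l2] [/perm_size]]]. Qed.

Lemma is_subsum_cons x L v :
  is_subsum (x :: L) v -> is_subsum L v \/ x <= v /\ is_subsum L (v - x).
Proof.
case=> l1 [l2 [eqL <-]].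
have : x \in l1 ++ l2 by rewrite -(perm_mem eqL) mem_head.
rewrite mem_cat => /orP[x_l1 | x_l2].
  have sum_l1 := perm_sumn (perm_to_rem x_l1); rewrite /= in sum_l1.
  right; split; first by rewrite sum_l1 leq_addr.
  exists (rem x l1), l2; split; last by rewrite sum_l1 addKn.
  by rewrite -(perm_cons x) (perm_trans eqL) // -cat_cons perm_cat2r perm_to_rem.
left; exists l1, (rem x l2); split=> //.
rewrite -(perm_cons x) (perm_trans eqL) // perm_sym -cat1s.
by rewrite perm_catCA perm_cat2l perm_sym perm_to_rem.
Qed.

Lemma is_subsum_small L v : is_subsum L v -> all (leq v.+1) L -> v = 0.
Proof.
elim: L v => [|x L IHL] v; first by move/is_subsum_nil.
case/is_subsum_cons => [/IHL IH /andP[_ /IH] // | [x_le_v _] /andP[]].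
by rewrite ltnNge x_le_v.
Qed.

Lemma is_subsum_small_tail x L v :
  is_subsum (x :: L) v -> all (leq v.+1) L -> v = 0 \/ v = x.
Proof.
case/is_subsum_cons => [sub_v | [x_le_v sub_vx]] L_gt_v.
  by left; exact: is_subsum_small sub_v L_gt_v.
right; apply/eqP; rewrite eqn_leq x_le_v andbT -subn_eq0; apply/eqP.
apply: is_subsum_small sub_vx _.
by apply: sub_all L_gt_v => y; apply: leq_ltn_trans; rewrite leq_subr.
Qed.

Lemma is_subsum2 a b v : is_subsum [:: a; b] v -> v \in [:: 0; a; b; a + b].
Proof.
by case/is_subsum_cons => [|[a_le_v]] /is_subsum_small_tail /(_ isT); rewrite !inE; lia.
Qed.

Lemma is_subsum3 k a b v : is_subsum [:: k; a; b] v ->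
  v \in [:: 0; k; a; b; k + a; k + b; a + b; k + a + b].
Proof.
by case/is_subsum_cons => [/is_subsum2 | [k_le_v /is_subsum2]]; rewrite !inE; lia.
Qed.

Lemma is_subsum2_half a b v : is_subsum [:: a; b] v -> v.*2 = a + b -> v = a.
Proof. by move/is_subsum2; rewrite !inE; lia. Qed.

Lemma is_subsum3_half k a b v : is_subsum [:: k; a; b] v -> v.*2 = k + a + b ->
  0 < k -> k < a -> k < b -> v \in [:: a; b; k + a; k + b].
Proof. by move/is_subsum3; rewrite !inE; lia. Qed.

Section PermOrbits.

Variables (T : finType) (s : {perm T}).
Implicit Types (A B : {set T}) (x y : T).

Lemma mem_perm_stable B x : s @: B = B -> (s x \in B) = (x \in B).
Proof. by move=> sB; rewrite -{1}sB mem_imset //; exact: perm_inj. Qed.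

Lemma mem_perm_swap A x : s @: A = ~: A -> (s x \in A) = (x \notin A).
Proof.
move=> sA; have := mem_imset A x (@perm_inj _ s).
by rewrite sA inE => <-; rewrite negbK.
Qed.

Lemma imset_permC A : s @: (~: A) = ~: (s @: A).
Proof.
by apply/setP => y; rewrite -(permKV s y) inE !mem_imset ?inE //; exact: perm_inj.
Qed.

Lemma imset_perm_closed B : {in B, forall x, s x \in B} -> s @: B = B.
Proof.
move=> sB; apply/eqP; rewrite eqEcard card_imset ?leqnn ?andbT; last exact: perm_inj.
by apply/subsetP => _ /imsetP[x xB ->]; exact: sB.
Qed.

Lemma porbit_stable x : s @: porbit s x = porbit s x.
Proof.
apply: imset_perm_closed => y; rewrite -eq_porbit_mem => /eqP <-.
by have := mem_porbit s 1 y; rewrite expg1.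
Qed.

Lemma porbit_sub_stable B x : s @: B = B -> x \in B -> porbit s x \subset B.
Proof.
move=> sB xB; apply/subsetP => _ /porbitP[i ->].
by elim: i => [|i IHi]; rewrite ?expg0 ?perm1 // expgSr permM mem_perm_stable.
Qed.

Lemma porbits_partition_stable B : s @: B = B ->
  partition [set X in porbits s | X \subset B] B.
Proof.
move=> sB; apply/and3P; split.
- apply/eqP/setP => y; apply/bigcupP/idP => [[X] | yB].
    by rewrite inE => /andP[_ /subsetP XB] /XB.
  exists (porbit s y); last exact: porbit_id.
  by rewrite inE imset_f // porbit_sub_stable.
- apply/trivIsetP => _ _ /setIdP[/imsetP[x _ ->] _] /setIdP[/imsetP[y _ ->] _].
  move=> neq_xy; rewrite -setI_eq0; apply: contraNT neq_xy => /set0Pn[z /setIP[zx zy]].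
  have /eqP <- : porbit s z == porbit s x by rewrite eq_porbit_mem.
  by rewrite eq_porbit_mem.
- rewrite inE negb_and; apply/orP; left; apply/imsetP => -[x _ /setP/(_ x)].
  by rewrite porbit_id inE.
Qed.

Lemma porbit_swap_even A x : s @: A = ~: A -> ~~ odd #|porbit s x|.
Proof.
move=> sA; set Y := porbit s x.
have sYA : s @: (Y :&: A) = Y :&: ~: A.
  by rewrite imsetI ?porbit_stable ?sA // => y z _ _; exact: perm_inj.
rewrite -(cardsID A Y) setDE -sYA card_imset; last exact: perm_inj.
by rewrite addnn odd_double.
Qed.

Lemma stable_eq_small_porbit B x k :
  #|[set X in porbits s | #|X| <= k]| <= 1 -> s @: B = B -> #|B| <= k ->
  x \in B -> B = porbit s x.
Proof.
move=> small1 sB Bk xB.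
have small_in y : y \in B -> porbit s y \in [set X in porbits s | #|X| <= k].
  move=> yB; rewrite inE imset_f //=.
  exact: leq_trans (subset_leq_card (porbit_sub_stable sB yB)) Bk.
apply/eqP; rewrite eqEsubset porbit_sub_stable // andbT.
apply/subsetP => y yB; rewrite -eq_porbit_mem.
by apply/eqP; apply: (card_le1_eqP small1); apply: small_in.
Qed.

Lemma stable_small_uniq B B' k :
  #|[set X in porbits s | #|X| <= k]| <= 1 -> s @: B = B -> s @: B' = B' ->
  0 < #|B| <= k -> 0 < #|B'| <= k -> B = B'.
Proof.
move=> small1 sB sB' /andP[/card_gt0P[x xB] Bk] /andP[/card_gt0P[y yB'] B'k].
have eB := stable_eq_small_porbit small1 sB Bk xB.
have eB' := stable_eq_small_porbit small1 sB' B'k yB'.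
rewrite eB in Bk *; rewrite eB' in B'k *.
by apply: (card_le1_eqP small1); rewrite inE imset_f.
Qed.

End PermOrbits.

Section CycleLengths.

Variables (n : nat) (s : {perm 'I_n}).
Implicit Types A B : {set 'I_n}.

Lemma stable_subsum B : s @: B = B -> is_subsum (cycle_lengths s) #|B|.
Proof.
move=> sB; pose inB (X : {set 'I_n}) := X \subset B.
exists [seq #|(X : {set 'I_n})| | X <- filter inB (enum (porbits s))],
       [seq #|(X : {set 'I_n})| | X <- filter (predC inB) (enum (porbits s))].
split.
  by rewrite -map_cat perm_map // perm_sym perm_filterC.
rewrite (card_partition (porbits_partition_stable sB)).
rewrite sumnE big_map big_filter big_enum_cond.
by apply: eq_bigl => X; rewrite inE.
Qed.

Lemma cycle_lengths_swap_even A :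
  s @: A = ~: A -> all (fun k => ~~ odd k) (cycle_lengths s).
Proof.
move=> sA; apply/allP => _ /mapP[_ /[!mem_enum] /imsetP[x _ ->] ->].
exact: porbit_swap_even sA.
Qed.

Lemma Alt_cycle_lengths_even_size :
  ~~ odd n -> s \in ('Alt_('I_n))%g -> ~~ odd (size (cycle_lengths s)).
Proof.
by move=> even_n; rewrite Alt_even /odd_perm card_ord (negbTE even_n) size_map -cardE.
Qed.

Lemma card_small_porbits k :
  #|[set X in porbits s | #|X| <= k]| = count (leq^~ k) (cycle_lengths s).
Proof.
rewrite count_map -size_filter cardE setIdE; apply: perm_size.
apply: perm_trans (enum_setI _ _) _.
by under eq_filter do rewrite inE.
Qed.

Lemma ncycle_card_stable B :
  perm_eq (cycle_lengths s) [:: n] -> s @: B = B -> #|B| = 0 \/ #|B| = n.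
Proof.
by move=> ct sB; apply: is_subsum_small_tail (is_subsum_perm ct (stable_subsum sB)) _.
Qed.

Lemma ncycle_stable_trivial B :
  perm_eq (cycle_lengths s) [:: n] -> s @: B = B -> B = set0 \/ B = setT.
Proof.
move=> ct /(ncycle_card_stable ct) [/cards0_eq -> | cardB]; first by left.
by right; apply/eqP; rewrite eqEcard subsetT cardsT card_ord cardB leqnn.
Qed.

End CycleLengths.

Lemma part_stabC n (A : {set 'I_n}) : part_stab (~: A) = part_stab A.
Proof.
apply/setP => t; rewrite !inE imset_permC setCK (inj_eq (@setC_inj _)).
by rewrite (can2_eq setCK setCK) orbC.
Qed.

Lemma calH_mem_cases n (H : {set {perm 'I_n}}) (s : {perm 'I_n}) :
  in_calH H -> s \in H ->
  [\/ exists A : {set 'I_n}, #|A| = n %/ 2 /\ s @: A = A,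
      exists A : {set 'I_n}, H = part_stab A /\ s @: A = ~: A,
      H = ('Alt_('I_n))%g
    | exists A : {set 'I_n}, [/\ 0 < #|A| <= n %/ 3 - 1, H = set_stab A & s @: A = A]].
Proof.
case=> [[A [cardA ->]] | [-> _ | [i [i_range [A [cardA ->]]]]]]; last 2 first.
- exact: Or43.
- by rewrite inE => /eqP sA; apply: Or44; exists A; rewrite cardA.
by rewrite inE => /orP[] /eqP sA; [apply: Or41 | apply: Or42]; exists A.
Qed.

Section CycleTypeCases.

Variables (n : nat) (s : {perm 'I_n}) (H H' : {set {perm 'I_n}}).
Hypotheses (even_n : ~~ odd n) (calH : in_calH H) (calH' : in_calH H').
Hypotheses (sH : s \in H) (sH' : s \in H').

Let half_n : (n %/ 2).*2 = n.
Proof. by rewrite divn2 even_halfK. Qed.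

Let card_lt_third (A : {set 'I_n}) x :
  0 < #|A| <= n %/ 3 - 1 -> n %/ 3 <= x -> #|A| < x.
Proof. by lia. Qed.

Let not_Alt_of_odd_size G :
  G = ('Alt_('I_n))%g -> s \in G -> odd (size (cycle_lengths s)) -> False.
Proof. by move=> -> /(Alt_cycle_lengths_even_size even_n) /negbTE ->. Qed.

Lemma ncycle_calH_uniq : 0 < n -> perm_eq (cycle_lengths s) [:: n] -> H = H'.
Proof.
move=> n_gt0 ct.
have swap_only G : in_calH G -> s \in G -> exists A, G = part_stab A /\ s @: A = ~: A.
  move=> calG sG.
  case: (calH_mem_cases calG sG) => // [[A [cardA sA]] | GAlt | [A [cardA _ sA]]].
  - by case: (ncycle_card_stable ct sA); lia.
  - by case: (not_Alt_of_odd_size GAlt sG); rewrite (perm_size ct).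
  - by case: (ncycle_card_stable ct sA); lia.
have [A [-> sA]] := swap_only H calH sH.
have [A' [-> sA']] := swap_only H' calH' sH'.
pose B := [set x | (x \in A) == (x \in A')].
have sB : s @: B = B.
  apply: imset_perm_closed => x; rewrite !inE (mem_perm_swap _ sA) (mem_perm_swap _ sA').
  by case: (x \in A); case: (x \in A').
case: (ncycle_stable_trivial ct sB) => /setP B_triv; [rewrite -part_stabC |];
  congr part_stab; apply/setP => x; have := B_triv x; rewrite !inE;
  by case: (x \in A); case: (x \in A').
Qed.

Lemma two_cycles_calH_uniq a b :
  perm_eq (cycle_lengths s) [:: a; b] -> a + b = n -> odd a -> a != n %/ 2 ->
  n %/ 3 <= a -> n %/ 3 <= b -> H = H'.
Proof.
move=> ct ab_n odd_a a_neq n3_a n3_b.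
have Alt_only G : in_calH G -> s \in G -> G = ('Alt_('I_n))%g.
  move=> calG sG.
  case: (calH_mem_cases calG sG) => // [[A [cardA sA]] | [A [_ sA]] | [A [cardA _ sA]]].
  - have := is_subsum2_half (is_subsum_perm ct (stable_subsum sA)).
    by rewrite cardA half_n => /(_ (esym ab_n)) a_eq; rewrite a_eq eqxx in a_neq.
  - by have := cycle_lengths_swap_even sA; rewrite (perm_all _ ct) /= odd_a.
  - have := is_subsum_small (is_subsum_perm ct (stable_subsum sA)).
    rewrite /= !(card_lt_third cardA) // => /(_ isT) A0.
    by rewrite A0 in cardA.
by rewrite (Alt_only H calH sH) (Alt_only H' calH' sH').
Qed.

Lemma three_cycles_calH_uniq k a b :
  perm_eq (cycle_lengths s) [:: k; a; b] -> k + a + b = n -> 0 < k -> k < a -> k < b ->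
  n %/ 3 <= a -> n %/ 3 <= b -> odd a || odd b ->
  all (fun v => v != n %/ 2) [:: a; b; k + a; k + b] -> H = H'.
Proof.
move=> ct kab_n k_gt0 k_lt_a k_lt_b n3_a n3_b odd_ab not_half.
have stab_only G : in_calH G -> s \in G ->
    exists A, [/\ G = set_stab A, s @: A = A & #|A| = k].
  move=> calG sG.
  case: (calH_mem_cases calG sG) =>
    [[A [cardA sA]] | [A [_ sA]] | GAlt | [A [cardA -> sA]]].
  - have := is_subsum3_half (is_subsum_perm ct (stable_subsum sA)).
    rewrite cardA half_n => /(_ (esym kab_n) k_gt0 k_lt_a k_lt_b) half_in.
    by move/allP: not_half => /(_ _ half_in); rewrite eqxx.
  - have := cycle_lengths_swap_even sA.
    rewrite (perm_all _ ct) /= andbT => /and3P[_ even_a even_b].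
    by move: odd_ab; rewrite (negbTE even_a) (negbTE even_b).
  - by case: (not_Alt_of_odd_size GAlt sG); rewrite (perm_size ct).
  - exists A; split=> //.
    case: (is_subsum_small_tail (is_subsum_perm ct (stable_subsum sA))) => //.
      by rewrite /= !(card_lt_third cardA).
    by move=> A0; rewrite A0 in cardA.
have small1 : #|[set X in porbits s | #|X| <= k]| <= 1.
  rewrite card_small_porbits (seq.permP ct) /= leqnn.
  by rewrite (leqNgt a) (leqNgt b) k_lt_a k_lt_b.
have [A [-> sA cardA]] := stab_only H calH sH.
have [A' [-> sA' cardA']] := stab_only H' calH' sH'.
by rewrite (stable_small_uniq small1 sA sA') // ?cardA ?cardA' k_gt0 leqnn.
Qed.

End CycleTypeCases.

Theorem lemma3p7 (n : nat) :
  30 < n -> n %% 6 = 0 ->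
  forall H H' : {set {perm 'I_n}},
    in_calH H -> in_calH H' -> H <> H' ->
    forall s : {perm 'I_n}, in_Pi s -> ~ (s \in H /\ s \in H').
Proof.
move=> n_gt30 n_mod6 H H' calH calH' neqHH' s Pi_s [sH sH']; apply: neqHH'.
have even_n : ~~ odd n by lia.
have three := three_cycles_calH_uniq even_n calH calH' sH sH'.
case: Pi_s => [ct | [Pi0 | [ct | [i [i_ge2 i_le]]]]].
- by apply: (ncycle_calH_uniq even_n calH calH' sH sH' _ ct); lia.
- move: Pi0; rewrite /in_Pi0; case: ifP => parity_half ct;
    by apply: (two_cycles_calH_uniq even_n calH calH' sH sH' ct); lia.
- by apply: (three _ _ _ ct) => /=; lia.
- case: ifP => odd_i; first by case=> i_ge3 ct; apply: (three _ _ _ ct) => /=; lia.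
  case: ifP => odd_half; first by move=> ct; apply: (three _ _ _ ct) => /=; lia.
  by case: ifP => /eqP i2 ct; apply: (three _ _ _ ct) => /=; lia.
Qed.
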